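(* For $d\ge1$ let $\tilde{\mathcal T}_d:[0,1]\to\mathbb R$ be defined by $\tilde{\mathcal T}_d(x)=\frac{1}{d+1}\frac{\partial}{\partial q}F^{(d)}_q(x)\big|_{q=1/(d+1)}$. Then $$\lim_{d\to\infty}\ \sup_{x\in[0,1]}\big|\tilde{\mathcal T}_d(x)-x(1-x)\big|=0.$$
   Context: Fix $d\ge1$. For $q\in(0,1)$ let $t_q\in(0,1)$ be the unique solution in $(0,1)$ of $q^d+q^{d-1}t+\dots+t^d=q^{d-1}$ (so $t_q=q$ when $q=1/(d+1)$). Let $\nu^{(d)}_q$ be the product measure on $\{0,1,\dots,d\}^{\mathbb N}$ with i.i.d. coordinates, $\nu^{(d)}_q(\omega_i=m)=t_q^m/q^{m-1}$ for $m=0,\dots,d$. Let $F^{(d)}_q(x)=\nu^{(d)}_q\big(\{\omega:\sum_{i\ge1}\omega_i(d+1)^{-i}\le x\}\big)$, $x\in[0,1]$. Equivalently, writing $x=\sum_j\omega_j(d+1)^{-j}$ in base $d+1$ and $b=t_q/q$, $F^{(d)}_q(x)=\sum_{j\ge1}\big(\sum_{i=0}^{\omega_j-1}b^i\big)q^jb^{s^1_j+2s^2_j+\dots+ds^d_j-\omega_j}$, where $s^m_j$ is the number of occurrences of $m$ among $\omega_1,\dots,\omega_j$. (For $d=1$, $2\tilde{\mathcal T}_1$ is the Takagi function.) *)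

From Stdlib Require Import Reals Lra Lia ZArith ClassicalEpsilon.
Open Scope R_scope.

Definition tq (d : nat) (q : R) : R :=
  epsilon (inhabits 0%R)
    (fun t => 0 < t < 1 /\
       sum_f_R0 (fun i => q ^ (d - i) * t ^ i) d = q ^ (d - 1)).

Definition bq (d : nat) (q : R) : R := tq d q / q.

(* j-th base-(d+1) digit of x (j >= 1): greedy expansion for x < 1,
   and the expansion 0.ddd... for x = 1. *)
Definition digit (d : nat) (x : R) (j : nat) : nat :=
  if Rlt_dec x 1 then
    Z.to_nat (Int_part (x * INR (S d) ^ j)
              - Z.of_nat (S d) * Int_part (x * INR (S d) ^ (j - 1)))
  else d.

Fixpoint digsum (d : nat) (x : R) (n : nat) : nat :=
  match n with
  | O => O
  | S n' => (digsum d x n' + digit d x n)%nat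
  end.

Fixpoint geom_part (b : R) (n : nat) : R :=
  match n with
  | O => 0
  | S n' => geom_part b n' + b ^ n'
  end.

(* The j-th term (j = n+1) of the series for F_q^{(d)}(x):
   (sum_{i<omega_j} b^i) q^j b^(s^1_j + 2 s^2_j + ... + d s^d_j - omega_j),
   where s^1_j + ... + d s^d_j - omega_j = omega_1 + ... + omega_{j-1}. *)
Definition Fterm (d : nat) (q x : R) (n : nat) : R :=
  geom_part (bq d q) (digit d x (S n)) * q ^ (S n) * bq d q ^ (digsum d x n).

Definition F (d : nat) (q x : R) : R :=
  epsilon (inhabits 0%R) (fun l => infinite_sum (Fterm d q x) l).

(* Writing [b = t_q / q], the equation defining [t_q] becomes [1 + b + ... + b^d = 1/q]. At
   [q0 = 1/(d+1)] its solution is [b = 1]; as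
   [1 + b + ... + b^d - (d+1) = (b - 1) sum_{i<=d} (1 + ... + b^(i-1))] and the cofactor is
   [d(d+1)/2] at [b = 1], the map [q |-> b] has derivative [-2(d+1)/d] at [q0].
   Every term [(1 + ... + b^(omega_j - 1)) q^j b^(omega_1 + ... + omega_(j-1))] of [F_q(x)] is
   then differentiable at [q0], with increments near [q0] at most [|q - q0| C (j+1) (5/7)^j],
   so [F_q(x)] can be differentiated termwise.
   Multiplied by [q0], the first term of the derivative is [y (1 - y) (1 + 1/d)] with
   [y = omega_1/(d+1)] within [1/(d+1)] of [x], while the later terms carry a factor
   [q0 <= 1/d]; so the error is [O(1/d)] uniformly in [x]. *)

From Stdlib Require Import Reals Lra Lia ZArith ClassicalEpsilon.
From Coquelicot Require Import Coquelicot.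
Open Scope R_scope.

Lemma pow_sub_le (k : nat) (u v W : R) : 0 <= u <= W -> 0 <= v <= W ->
  Rabs (u ^ S k - v ^ S k) <= INR (S k) * Rabs (u - v) * W ^ k.
Proof.
  intros Hu Hv. induction k as [|k IH].
  - simpl. rewrite !Rmult_1_r. lra.
  - replace (u ^ S (S k) - v ^ S (S k)) with (u * (u ^ S k - v ^ S k) + v ^ S k * (u - v))
      by (simpl; ring).
    eapply Rle_trans; [apply Rabs_triang|].
    rewrite !Rabs_mult, (Rabs_right u), (Rabs_right (v ^ S k)) by (apply Rle_ge; try apply pow_le; lra).
    assert (Hv' : v ^ S k <= W ^ S k) by (apply pow_incr; lra).
    assert (HW : 0 <= W ^ k) by (apply pow_le; lra).
    assert (u * Rabs (u ^ S k - v ^ S k) <= W * (INR (S k) * Rabs (u - v) * W ^ k))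
      by (apply Rmult_le_compat; try lra; apply Rabs_pos).
    pose proof (Rabs_pos (u - v)). rewrite (S_INR (S k)). simpl in *. nra.
Qed.

Lemma pow_sub1_le (k : nat) (b B : R) : 0 <= b <= B -> 1 <= B ->
  Rabs (b ^ k - 1) <= INR k * Rabs (b - 1) * B ^ k.
Proof.
  intros Hb HB. destruct k as [|k].
  - simpl. rewrite Rminus_diag, Rabs_R0. lra.
  - rewrite <- (pow1 (S k)) at 1.
    eapply Rle_trans; [apply (pow_sub_le k b 1 B); lra|].
    apply Rmult_le_compat_l; [apply Rmult_le_pos; [apply pos_INR|apply Rabs_pos]|].
    simpl. assert (0 <= B ^ k) by (apply pow_le; lra). nra.
Qed.

Lemma pow_1plus_mul_le (d : nat) (y : R) : 0 <= y -> INR d * y <= 1 ->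
  (1 + y) ^ d * (1 - INR d * y) <= 1.
Proof.
  intros Hy Hdy. induction d as [|d IH]; [simpl; lra|].
  rewrite S_INR in *. pose proof (pos_INR d).
  assert (IH' : (1 + y) ^ d * (1 - INR d * y) <= 1) by (apply IH; nra).
  assert (0 <= (1 + y) ^ d) by (apply pow_le; lra).
  assert ((1 + y) ^ d * ((1 + y) * (1 - (INR d + 1) * y)) <= (1 + y) ^ d * (1 - INR d * y))
    by (apply Rmult_le_compat_l; nra).
  simpl. nra.
Qed.

Lemma succ_mul_pow_le (n : nat) (s : R) : 0 <= s < 1 -> (INR n + 1) * s ^ n <= / (1 - s).
Proof.
  intros Hs.
  assert (Hle : sum_f_R0 (fun _ => s ^ n) n <= sum_f_R0 (fun k => s ^ k) n).
  { apply sum_Rle. intros k Hk.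
    replace n with (k + (n - k))%nat at 1 by lia. rewrite pow_add.
    assert (0 <= s ^ k) by (apply pow_le; lra).
    assert (s ^ (n - k) <= 1) by (rewrite <- (pow1 (n - k)); apply pow_incr; lra).
    nra. }
  rewrite sum_cte, tech3, S_INR in Hle by lra.
  assert (0 <= s ^ S n) by (apply pow_le; lra).
  assert ((1 - s ^ S n) / (1 - s) <= / (1 - s)).
  { unfold Rdiv. rewrite <- (Rmult_1_l (/ (1 - s))) at 2.
    apply Rmult_le_compat_r; [left; apply Rinv_0_lt_compat|]; lra. }
  lra.
Qed.

Lemma ex_series_succ_mul_pow (r : R) : 0 <= r < 1 ->
  ex_series (fun n => (INR n + 1) * r ^ n).
Proof.
  intros Hr. set (s := (1 + r) / 2).
  apply (ex_series_le (V := R_CompleteNormedModule) _ (fun n => / (1 - r / s) * s ^ n)).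
  - intros n. rewrite Rabs_right
      by (apply Rle_ge, Rmult_le_pos; [pose proof (pos_INR n); lra|apply pow_le; lra]).
    replace r with (r / s * s) at 1 by (field; unfold s; lra).
    rewrite Rpow_mult_distr, <- Rmult_assoc.
    apply Rmult_le_compat_r; [apply pow_le; unfold s; lra|].
    apply succ_mul_pow_le. split.
    + apply Rmult_le_pos; [lra|left; apply Rinv_0_lt_compat; unfold s; lra].
    + apply (Rmult_lt_reg_r s); [unfold s; lra|]. field_simplify; unfold s; lra.
  - apply (ex_series_scal_l _ (fun n => s ^ n)), ex_series_geom. rewrite Rabs_right; unfold s; lra.
Qed.

Lemma pow_mul_pow_sub_le (n m : nat) (p z y Q B : R) :
  0 <= p <= Q -> 0 <= z <= Q -> 0 <= y <= B -> 1 <= B ->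
  Rabs (p ^ S n * y ^ m - z ^ S n)
    <= (INR (S n) * Rabs (p - z) * Q ^ n + z ^ S n * INR m * Rabs (y - 1)) * B ^ m.
Proof.
  intros Hp Hz Hy HB.
  replace (p ^ S n * y ^ m - z ^ S n) with ((p ^ S n - z ^ S n) * y ^ m + z ^ S n * (y ^ m - 1))
    by ring.
  eapply Rle_trans; [apply Rabs_triang|]. rewrite !Rabs_mult.
  rewrite (Rabs_right (y ^ m)), (Rabs_right (z ^ S n)) by (apply Rle_ge, pow_le; lra).
  pose proof (pow_sub_le n p z Q Hp Hz). pose proof (pow_sub1_le m y B Hy HB).
  assert (y ^ m <= B ^ m) by (apply pow_incr; lra).
  assert (0 <= y ^ m) by (apply pow_le; lra).
  assert (0 <= z ^ S n) by (apply pow_le; lra).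
  pose proof (Rabs_pos (p ^ S n - z ^ S n)). pose proof (Rabs_pos (y - 1)).
  assert (0 <= INR (S n) * Rabs (p - z) * Q ^ n)
    by (apply Rmult_le_pos; [apply Rmult_le_pos; [apply pos_INR|apply Rabs_pos]|apply pow_le; lra]).
  nra.
Qed.

Lemma Series_abs_le_succ_mul_pow (a : nat -> R) (c r : R) : 0 <= r <= / 2 ->
  (forall n, Rabs (a n) <= c * ((INR n + 1) * r ^ n)) -> Rabs (Series a) <= 12 * c.
Proof.
  intros Hr Ha.
  assert (Hc : 0 <= c) by (specialize (Ha 0%nat); simpl in Ha; pose proof (Rabs_pos (a 0%nat)); lra).
  (* [(n+1) r^n <= (n+1) (3/4)^n (2/3)^n <= 4 (2/3)^n] *)
  assert (Hb : forall n, Rabs (Rabs (a n)) <= 4 * c * (2 / 3) ^ n).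
  { intros n. rewrite Rabs_Rabsolu. eapply Rle_trans; [apply Ha|].
    replace (4 * c * (2 / 3) ^ n) with (c * (4 * (2 / 3) ^ n)) by ring.
    apply Rmult_le_compat_l; [exact Hc|].
    pose proof (succ_mul_pow_le n (3 / 4) ltac:(lra)) as H34.
    replace (/ (1 - 3 / 4)) with 4 in H34 by field.
    assert (r ^ n <= (3 / 4) ^ n * (2 / 3) ^ n)
      by (rewrite <- Rpow_mult_distr; apply pow_incr; lra).
    assert (0 <= (2 / 3) ^ n) by (apply pow_le; lra). pose proof (pos_INR n).
    assert ((INR n + 1) * r ^ n <= (INR n + 1) * ((3 / 4) ^ n * (2 / 3) ^ n))
      by (apply Rmult_le_compat_l; lra).
    nra. }
  assert (Hg : ex_series (fun n => 4 * c * (2 / 3) ^ n)).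
  { apply (ex_series_scal_l _ (fun n => (2 / 3) ^ n)), ex_series_geom. rewrite Rabs_right; lra. }
  eapply Rle_trans; [apply Series_Rabs, (ex_series_le (V := R_CompleteNormedModule) _ _ Hb Hg)|].
  eapply Rle_trans; [apply Series_le; [|exact Hg]|].
  - intros n. split; [apply Rabs_pos|]. rewrite <- (Rabs_Rabsolu (a n)). apply Hb.
  - rewrite Series_scal_l, Series_geom by (rewrite Rabs_right; lra). lra.
Qed.

(** * Derivatives and termwise differentiation *)

Lemma continuity_pt_lipschitz (f : R -> R) (z K del : R) : 0 < del ->
  (forall q, Rabs (q - z) < del -> Rabs (f q - f z) <= K * Rabs (q - z)) ->
  continuity_pt f z.
Proof.
  intros Hdel Hf eps Heps.
  exists (Rmin del (eps / (Rabs K + 1))). split.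
  { apply Rmin_pos; [lra|]. apply Rdiv_lt_0_compat; [lra|pose proof (Rabs_pos K); lra]. }
  intros q [_ Hq]. simpl in *. unfold R_dist in *.
  pose proof (Rmin_l del (eps / (Rabs K + 1))). pose proof (Rmin_r del (eps / (Rabs K + 1))).
  pose proof (Rabs_pos K). pose proof (Rle_abs K). pose proof (Rabs_pos (q - z)).
  eapply Rle_lt_trans; [apply Hf; lra|].
  apply Rle_lt_trans with ((Rabs K + 1) * Rabs (q - z)); [nra|].
  apply (Rmult_lt_reg_r (/ (Rabs K + 1))); [apply Rinv_0_lt_compat; lra|].
  field_simplify; [|lra|lra]. unfold Rdiv in *. lra.
Qed.

(* Caratheodory's characterisation of the derivative, in the direction we need. *)
Lemma derivable_pt_lim_factor (f k : R -> R) (z del : R) : 0 < del ->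
  (forall q, Rabs (q - z) < del -> f q - f z = (q - z) * k q) ->
  continuity_pt k z -> derivable_pt_lim f z (k z).
Proof.
  intros Hdel Hf Hk eps Heps.
  destruct (Hk eps Heps) as [a [Ha Hka]]. simpl in Hka. unfold R_dist in Hka.
  exists (mkposreal (Rmin a del) (Rmin_pos _ _ Ha Hdel)). simpl. intros h Hh0 Hh.
  pose proof (Rmin_l a del). pose proof (Rmin_r a del).
  rewrite Hf by (replace (z + h - z) with h by ring; lra).
  replace ((z + h - z) * k (z + h) / h) with (k (z + h)) by (field; exact Hh0).
  apply Hka. split; [split; [exact I|lra]|]. replace (z + h - z) with h by ring. lra.
Qed.

Lemma derivable_pt_lim_sum_f_R0 (f : nat -> R -> R) (f' : nat -> R) (z : R) (N : nat) :
  (forall n, derivable_pt_lim (f n) z (f' n)) ->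
  derivable_pt_lim (fun q => sum_f_R0 (fun n => f n q) N) z (sum_f_R0 f' N).
Proof.
  intros Hf. induction N as [|N IH]; [apply Hf|].
  exact (derivable_pt_lim_plus (fun q => sum_f_R0 (fun n => f n q) N) (f (S N)) z _ _ IH (Hf (S N))).
Qed.

Lemma derive_abs_le (g : R -> R) (z l M del : R) : 0 < del ->
  derivable_pt_lim g z l ->
  (forall h, Rabs h < del -> Rabs (g (z + h) - g z) <= Rabs h * M) -> Rabs l <= M.
Proof.
  intros Hdel Hg HM. apply Rnot_lt_le. intros Hlt.
  destruct (Hg (Rabs l - M) ltac:(lra)) as [a Ha].
  set (h := Rmin a del / 2).
  assert (Hh : 0 < h) by (unfold h; pose proof (Rmin_pos a del (cond_pos a) Hdel); lra).
  assert (Hha : Rabs h < a /\ Rabs h < del).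
  { rewrite Rabs_right by lra. pose proof (Rmin_l a del). pose proof (Rmin_r a del).
    pose proof (cond_pos a). unfold h; lra. }
  specialize (Ha h ltac:(lra) (proj1 Hha)). specialize (HM h (proj2 Hha)).
  assert (Rabs ((g (z + h) - g z) / h) <= M).
  { unfold Rdiv. rewrite Rabs_mult, Rabs_inv.
    apply (Rmult_le_reg_r (Rabs h)); [apply Rabs_pos_lt; lra|].
    rewrite Rmult_assoc, Rinv_l by (apply Rabs_no_R0; lra). lra. }
  pose proof (Rabs_triang_inv l ((g (z + h) - g z) / h)).
  rewrite <- Rabs_Ropp, Ropp_minus_distr in Ha. lra.
Qed.

Lemma Series_sub_sum_le (a M : nat -> R) (N : nat) :
  (forall n, Rabs (a n) <= M n) -> ex_series M ->
  Rabs (Series a - sum_f_R0 a N) <= Series M - sum_f_R0 M N.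
Proof.
  intros HaM HM.
  assert (Ha : ex_series a) by exact (ex_series_le (V := R_CompleteNormedModule) a M HaM HM).
  rewrite (Series_incr_n a (S N)), (Series_incr_n M (S N)) by (auto; lia). simpl pred.
  replace (sum_f_R0 a N + Series (fun k => a (S N + k)%nat) - sum_f_R0 a N)
    with (Series (fun k => a (S N + k)%nat)) by ring.
  replace (sum_f_R0 M N + Series (fun k => M (S N + k)%nat) - sum_f_R0 M N)
    with (Series (fun k => M (S N + k)%nat)) by ring.
  assert (HMN : ex_series (fun k => M (S N + k)%nat)) by (apply ex_series_incr_n; exact HM).
  eapply Rle_trans; [apply Series_Rabs|].
  - refine (ex_series_le (V := R_CompleteNormedModule) _ _ _ HMN).
    intros k. apply Rle_trans with (1 := Req_le _ _ (Rabs_Rabsolu _)), HaM.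
  - apply Series_le; [|exact HMN]. intros k. split; [apply Rabs_pos|apply HaM].
Qed.

Lemma ex_series_shift (f : nat -> R -> R) (M : nat -> R) (z h c : R) :
  (forall n, Rabs (f n (z + h) - f n z) <= c * M n) -> ex_series M ->
  ex_series (fun n => f n z) -> ex_series (fun n => f n (z + h)).
Proof.
  intros Hf HM Hz.
  apply (ex_series_ext (fun n => f n z + (f n (z + h) - f n z))).
  - intros n. change (f n z + (f n (z + h) - f n z) = f n (z + h)). ring.
  - apply (ex_series_plus (fun n => f n z)); [exact Hz|].
    exact (ex_series_le (V := R_CompleteNormedModule) _ _ Hf (ex_series_scal_l c M HM)).
Qed.

(* A partial sum is differentiated termwise; both tails are bounded by the tail of [M]. *)
Lemma derivable_pt_lim_Series (f : nat -> R -> R) (f' M : nat -> R) (z del : R) :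
  0 < del -> (forall n, derivable_pt_lim (f n) z (f' n)) ->
  (forall n h, Rabs h < del -> Rabs (f n (z + h) - f n z) <= Rabs h * M n) ->
  ex_series M -> ex_series (fun n => f n z) ->
  derivable_pt_lim (fun q => Series (fun n => f n q)) z (Series f').
Proof.
  intros Hdel Hf HM HMs Hfz eps Heps.
  assert (Hf'M : forall n, Rabs (f' n) <= M n)
    by (intros n; exact (derive_abs_le (f n) z (f' n) (M n) del Hdel (Hf n) (HM n))).
  destruct (proj1 (is_series_Reals M (Series M)) (Series_correct M HMs) (eps / 3) ltac:(lra))
    as [N HN].
  specialize (HN N (Nat.le_refl N)). unfold R_dist in HN. apply Rabs_def2 in HN.
  destruct (derivable_pt_lim_sum_f_R0 f f' z N Hf (eps / 3) ltac:(lra)) as [a Ha].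
  exists (mkposreal (Rmin a del) (Rmin_pos _ _ (cond_pos a) Hdel)). simpl.
  intros h Hh0 Hh. pose proof (Rmin_l a del). pose proof (Rmin_r a del).
  set (u := fun n => (f n (z + h) - f n z) / h).
  assert (HuM : forall n, Rabs (u n) <= M n).
  { intros n. unfold u, Rdiv. rewrite Rabs_mult, Rabs_inv.
    apply (Rmult_le_reg_r (Rabs h)); [apply Rabs_pos_lt; exact Hh0|].
    rewrite Rmult_assoc, Rinv_l by (apply Rabs_no_R0; exact Hh0).
    rewrite Rmult_1_r, Rmult_comm. apply HM. lra. }
  assert (Hfh : ex_series (fun n => f n (z + h)))
    by (apply (ex_series_shift f M z h (Rabs h)); try assumption; intros n; apply HM; lra).
  replace ((Series (fun n => f n (z + h)) - Series (fun n => f n z)) / h) with (Series u)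
    by (unfold u, Rdiv; rewrite Series_scal_r, Series_minus by assumption; reflexivity).
  specialize (Ha h Hh0 ltac:(lra)).
  replace ((sum_f_R0 (fun n => f n (z + h)) N - sum_f_R0 (fun n => f n z) N) / h)
    with (sum_f_R0 u N) in Ha
    by (unfold u, Rdiv; rewrite <- minus_sum, (Rmult_comm _ (/ h)), scal_sum; reflexivity).
  pose proof (Series_sub_sum_le u M N HuM HMs).
  pose proof (Series_sub_sum_le f' M N Hf'M HMs).
  replace (Series u - Series f') with
    ((Series u - sum_f_R0 u N) - (Series f' - sum_f_R0 f' N) + (sum_f_R0 u N - sum_f_R0 f' N))
    by ring.
  eapply Rle_lt_trans; [apply Rabs_triang|].
  eapply Rle_lt_trans; [apply Rplus_le_compat_r, Rabs_triang|].
  rewrite Rabs_Ropp. lra.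
Qed.

(** * The parameter [b_q] *)

Lemma geom_part_mul_sub1 (b : R) (n : nat) : geom_part b n * (b - 1) = b ^ n - 1.
Proof. induction n as [|n IH]; simpl; [ring|]. rewrite Rmult_plus_distr_r, IH. ring. Qed.

Lemma geom_part_1 (n : nat) : geom_part 1 n = INR n.
Proof. induction n as [|n IH]; simpl geom_part; [reflexivity|]. rewrite IH, pow1, S_INR. ring. Qed.

Lemma geom_part_ge0 (b : R) (n : nat) : 0 <= b -> 0 <= geom_part b n.
Proof. intros Hb. induction n; simpl geom_part; [lra|]. pose proof (pow_le b n Hb). lra. Qed.

Lemma continuity_geom_part (n : nat) : continuity (fun b => geom_part b n).
Proof.
  induction n as [|n IH]; simpl.
  - apply continuity_const. now intros ? ?.
  - apply (continuity_plus (fun b => geom_part b n) (fun b => b ^ n)); auto.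
    apply derivable_continuous, derivable_pow.
Qed.

Lemma derivable_pt_lim_geom_part_1 (n : nat) :
  derivable_pt_lim (fun b => geom_part b n) 1 (INR n * (INR n - 1) / 2).
Proof.
  induction n as [|n IH]; simpl geom_part.
  - replace (INR 0 * (INR 0 - 1) / 2) with 0 by (simpl; lra). apply derivable_pt_lim_const.
  - replace (INR (S n) * (INR (S n) - 1) / 2) with (INR n * (INR n - 1) / 2 + INR n * 1 ^ pred n)
      by (rewrite pow1, S_INR; field).
    apply (derivable_pt_lim_plus (fun b => geom_part b n) (fun b => b ^ n)); auto.
    apply derivable_pt_lim_pow.
Qed.

Lemma geom_part_mul_sub_le (b p c e : R) (w : nat) :
  (forall i, (i < w)%nat -> Rabs (p * b ^ i - c) <= e) ->
  Rabs (geom_part b w * p - INR w * c) <= INR w * e.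
Proof.
  intros H. induction w as [|w IH]; simpl geom_part.
  - rewrite Rmult_0_l, Rmult_0_l, Rminus_diag, Rabs_R0. simpl; lra.
  - replace ((geom_part b w + b ^ w) * p - INR (S w) * c)
      with ((geom_part b w * p - INR w * c) + (p * b ^ w - c)) by (rewrite S_INR; ring).
    eapply Rle_trans; [apply Rabs_triang|].
    rewrite S_INR. specialize (IH (fun i Hi => H i ltac:(lia))). specialize (H w ltac:(lia)). lra.
Qed.

Definition q0 (d : nat) : R := / INR (S d).

Lemma q0_pos (d : nat) : 0 < q0 d.
Proof. apply Rinv_0_lt_compat, lt_0_INR; lia. Qed.

Lemma q0_mul_succ (d : nat) : q0 d * (INR d + 1) = 1.
Proof. unfold q0. rewrite S_INR. field. pose proof (pos_INR d). lra. Qed.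

Lemma q0_le_half (d : nat) : (1 <= d)%nat -> q0 d <= / 2.
Proof.
  intros Hd. unfold q0. apply Rinv_le_contravar; [lra|].
  replace 2 with (INR 2) by (simpl; lra). apply le_INR; lia.
Qed.

Lemma q0_lt1 (d : nat) : (1 <= d)%nat -> 0 < q0 d < 1.
Proof. intros Hd. pose proof (q0_pos d). pose proof (q0_le_half d Hd). lra. Qed.

Lemma q0_le_inv (d : nat) : (1 <= d)%nat -> q0 d <= / INR d.
Proof.
  intros Hd. unfold q0. apply Rinv_le_contravar; [apply lt_0_INR; lia|]. apply le_INR. lia.
Qed.

Definition sum_geom_part (d : nat) (b : R) : R := sum_f_R0 (fun i => geom_part b i) d.

Lemma geom_part_succ_sub (d : nat) (b : R) :
  geom_part b (S d) - INR (S d) = (b - 1) * sum_geom_part d b.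
Proof.
  unfold sum_geom_part. induction d as [|d IH].
  - simpl. ring.
  - rewrite tech5, Rmult_plus_distr_l, (Rmult_comm (b - 1) (geom_part b (S d))),
      geom_part_mul_sub1, <- IH, (S_INR (S d)). simpl. ring.
Qed.

Lemma sum_geom_part_ge1 (d : nat) (b : R) : (1 <= d)%nat -> 0 <= b -> 1 <= sum_geom_part d b.
Proof.
  intros Hd Hb. unfold sum_geom_part. induction d as [|d IH]; [lia|].
  destruct d as [|d]; [simpl; lra|].
  rewrite tech5. pose proof (geom_part_ge0 b (S (S d)) Hb). specialize (IH ltac:(lia)). lra.
Qed.

Lemma sum_geom_part_1 (d : nat) : sum_geom_part d 1 = INR d * INR (S d) / 2.
Proof.
  unfold sum_geom_part. induction d as [|d IH]; [simpl; lra|].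
  rewrite tech5, IH, geom_part_1, (S_INR (S d)), (S_INR d). field.
Qed.

Lemma continuity_sum_geom_part (d : nat) : continuity (sum_geom_part d).
Proof.
  unfold sum_geom_part. induction d as [|d IH]; simpl.
  - apply continuity_const. now intros ? ?.
  - apply (continuity_plus (fun b => sum_f_R0 (fun i => geom_part b i) d)
      (fun b => geom_part b (S d))); [exact IH|apply continuity_geom_part].
Qed.

Lemma sum_pow_rescale (d : nat) (q t : R) : q <> 0 ->
  sum_f_R0 (fun i => q ^ (d - i) * t ^ i) d = q ^ d * geom_part (t / q) (S d).
Proof.
  intros Hq. induction d as [|d IH]; [simpl; field|].
  rewrite tech5.
  change (geom_part (t / q) (S (S d))) with (geom_part (t / q) (S d) + (t / q) ^ S d).
  replace (sum_f_R0 (fun i => q ^ (S d - i) * t ^ i) d)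
    with (q * sum_f_R0 (fun i => q ^ (d - i) * t ^ i) d).
  - rewrite IH, Nat.sub_diag, pow_O.
    unfold Rdiv. rewrite Rpow_mult_distr, pow_inv.
    replace (q ^ S d) with (q * q ^ d) by reflexivity.
    field. split; [apply pow_nonzero|]; exact Hq.
  - rewrite scal_sum. apply sum_eq. intros i Hi.
    replace (S d - i)%nat with (S (d - i)) by lia. simpl. ring.
Qed.

Lemma tq_exists (d : nat) (q : R) : (1 <= d)%nat -> 0 < q < 1 ->
  exists t, 0 < t < 1 /\ sum_f_R0 (fun i => q ^ (d - i) * t ^ i) d = q ^ (d - 1).
Proof.
  intros Hd Hq.
  set (f := fun b => geom_part b (S d) - / q).
  assert (Hq1 : 1 < / q) by (rewrite <- Rinv_1; apply Rinv_lt_contravar; lra).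
  assert (Hf0 : f 0 < 0).
  { pose proof (geom_part_mul_sub1 0 (S d)) as E. rewrite pow_i in E by lia. unfold f. lra. }
  assert (Hf1 : 0 < f (/ q)).
  { pose proof (geom_part_succ_sub d (/ q)) as E.
    pose proof (sum_geom_part_ge1 d (/ q) Hd ltac:(lra)). rewrite S_INR in E.
    assert (1 <= INR d) by (apply (le_INR 1); exact Hd). unfold f. nra. }
  assert (Hc : continuity f).
  { apply (continuity_minus (fun b => geom_part b (S d)) (fun _ => / q)).
    - apply continuity_geom_part.
    - apply continuity_const. now intros ? ?. }
  destruct (IVT f 0 (/ q) Hc ltac:(lra) Hf0 Hf1) as [c [Hc01 Hfc]].
  assert (Hc0 : c <> 0) by (intros ->; lra).
  assert (Hcq : c <> / q) by (intros ->; lra).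
  exists (q * c). split; [split; [nra|]|].
  - apply (Rmult_lt_reg_r (/ q)); [apply Rinv_0_lt_compat; lra|].
    field_simplify; [|lra|lra]. unfold Rdiv in *. lra.
  - rewrite sum_pow_rescale by lra.
    replace (q * c / q) with c by (field; lra).
    replace (geom_part c (S d)) with (/ q) by (unfold f in Hfc; lra).
    replace d with (S (d - 1)) at 1 by lia. simpl. field. lra.
Qed.

Lemma tq_spec (d : nat) (q : R) : (1 <= d)%nat -> 0 < q < 1 ->
  0 < tq d q < 1 /\ geom_part (bq d q) (S d) = / q.
Proof.
  intros Hd Hq.
  destruct (epsilon_spec (inhabits 0) (fun t => 0 < t < 1 /\
       sum_f_R0 (fun i => q ^ (d - i) * t ^ i) d = q ^ (d - 1)) (tq_exists d q Hd Hq))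
    as [Ht HE].
  fold (tq d q) in Ht, HE. split; [exact Ht|].
  rewrite sum_pow_rescale in HE by lra. fold (bq d q) in HE.
  replace (q ^ d) with (q * q ^ (d - 1)) in HE
    by (rewrite tech_pow_Rmult; f_equal; lia).
  assert (0 < q ^ (d - 1)) by (apply pow_lt; lra).
  apply (Rmult_eq_reg_l (q * q ^ (d - 1))); [|nra].
  rewrite HE. field. lra.
Qed.

Lemma bq_pos (d : nat) (q : R) : (1 <= d)%nat -> 0 < q < 1 -> 0 < bq d q.
Proof.
  intros Hd Hq. destruct (tq_spec d q Hd Hq) as [Ht _].
  apply Rdiv_lt_0_compat; lra.
Qed.

Lemma bq_sub1 (d : nat) (q : R) : (1 <= d)%nat -> 0 < q < 1 ->
  bq d q - 1 = (q - q0 d) * - / (q * q0 d * sum_geom_part d (bq d q)).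
Proof.
  intros Hd Hq. destruct (tq_spec d q Hd Hq) as [_ HG].
  pose proof (geom_part_succ_sub d (bq d q)) as E.
  pose proof (sum_geom_part_ge1 d (bq d q) Hd (Rlt_le _ _ (bq_pos d q Hd Hq))).
  pose proof (q0_mul_succ d). pose proof (q0_pos d).
  rewrite HG, S_INR in E.
  replace (INR d + 1) with (/ q0 d) in E by (unfold q0; rewrite Rinv_inv, S_INR; reflexivity).
  replace (bq d q - 1) with ((bq d q - 1) * sum_geom_part d (bq d q) / sum_geom_part d (bq d q))
    by (field; lra).
  rewrite <- E. field. repeat split; lra.
Qed.

Lemma bq_q0 (d : nat) : (1 <= d)%nat -> bq d (q0 d) = 1.
Proof. intros Hd. pose proof (bq_sub1 d (q0 d) Hd (q0_lt1 d Hd)). rewrite Rminus_diag in H. lra. Qed.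

Lemma bq_lipschitz (d : nat) (q : R) : (1 <= d)%nat -> Rabs (q - q0 d) < q0 d / 2 ->
  0 < q < 1 /\ Rabs (bq d q - 1) <= 2 / q0 d ^ 2 * Rabs (q - q0 d).
Proof.
  intros Hd Hq. pose proof (q0_pos d). pose proof (q0_le_half d Hd).
  apply Rabs_def2 in Hq.
  assert (Hq1 : 0 < q < 1) by lra. split; [exact Hq1|].
  rewrite (bq_sub1 d q Hd Hq1), Rabs_mult, Rabs_Ropp, Rmult_comm.
  apply Rmult_le_compat_r; [apply Rabs_pos|].
  pose proof (sum_geom_part_ge1 d (bq d q) Hd (Rlt_le _ _ (bq_pos d q Hd Hq1))).
  rewrite Rabs_right by (apply Rle_ge, Rlt_le, Rinv_0_lt_compat; repeat apply Rmult_lt_0_compat; lra).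
  replace (2 / q0 d ^ 2) with (/ (q0 d / 2 * q0 d * 1)) by (field; lra).
  apply Rinv_le_contravar; [nra|].
  apply Rmult_le_compat; try lra; nra.
Qed.

Lemma derivable_pt_lim_bq (d : nat) : (1 <= d)%nat ->
  derivable_pt_lim (bq d) (q0 d) (- 2 * INR (S d) / INR d).
Proof.
  intros Hd. pose proof (q0_pos d) as Hz.
  set (k := fun q => - / (q * q0 d * sum_geom_part d (bq d q))).
  assert (Hbq : continuity_pt (bq d) (q0 d)).
  { apply (continuity_pt_lipschitz _ _ (2 / q0 d ^ 2) (q0 d / 2)); [lra|].
    intros q Hq. rewrite bq_q0 by exact Hd. apply bq_lipschitz; assumption. }
  assert (Hk : continuity_pt k (q0 d)).
  { apply (continuity_pt_opp (fun q => / (q * q0 d * sum_geom_part d (bq d q)))),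
      (continuity_pt_inv (fun q => q * q0 d * sum_geom_part d (bq d q))).
    - apply (continuity_pt_mult (fun q => q * q0 d) (fun q => sum_geom_part d (bq d q))).
      + apply (continuity_pt_mult (fun q => q) (fun _ => q0 d)).
        * apply derivable_continuous_pt, derivable_pt_id.
        * apply continuity_pt_const. now intros ? ?.
      + apply (continuity_pt_comp (bq d) (sum_geom_part d)); [exact Hbq|].
        apply continuity_sum_geom_part.
    - rewrite bq_q0 by exact Hd. pose proof (sum_geom_part_ge1 d 1 Hd ltac:(lra)).
      apply Rgt_not_eq. apply Rmult_gt_0_compat; [nra|lra]. }
  replace (- 2 * INR (S d) / INR d) with (k (q0 d)).
  - apply (derivable_pt_lim_factor (bq d) k (q0 d) (q0 d / 2)); [lra| |exact Hk].
    intros q Hq. rewrite bq_q0 by exact Hd.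
    apply bq_sub1; [exact Hd|apply (bq_lipschitz d q Hd Hq)].
  - unfold k. rewrite bq_q0, sum_geom_part_1 by exact Hd. unfold q0.
    assert (0 < INR d) by (apply lt_0_INR; lia). rewrite (S_INR d). field. lra.
Qed.

(** * Digits *)

Lemma digit_le (d : nat) (x : R) (j : nat) : 0 <= x <= 1 -> (1 <= j)%nat ->
  (digit d x j <= d)%nat.
Proof.
  intros Hx Hj. unfold digit. destruct (Rlt_dec x 1) as [Hl|Hl]; [|lia].
  set (m := INR (S d)). set (A := x * m ^ (j - 1)).
  replace (m ^ j) with (m * m ^ (j - 1)) by (rewrite tech_pow_Rmult; f_equal; lia).
  replace (x * (m * m ^ (j - 1))) with (m * A) by (unfold A; ring).
  assert (Hm : IZR (Z.of_nat (S d)) = m) by (unfold m; rewrite INR_IZR_INZ; reflexivity).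
  assert (Hm0 : 0 < m) by (unfold m; apply lt_0_INR; lia).
  pose proof (base_Int_part (m * A)). pose proof (base_Int_part A).
  assert ((Z.of_nat (S d) * Int_part A < Int_part (m * A) + 1)%Z).
  { apply lt_IZR. rewrite plus_IZR, mult_IZR, Hm. nra. }
  assert ((Int_part (m * A) < Z.of_nat (S d) * Int_part A + Z.of_nat (S d))%Z).
  { apply lt_IZR. rewrite plus_IZR, mult_IZR, Hm. nra. }
  lia.
Qed.

Lemma digsum_le (d : nat) (x : R) (n : nat) : 0 <= x <= 1 -> (digsum d x n <= d * n)%nat.
Proof.
  intros Hx. induction n as [|n IH]; simpl; [lia|].
  pose proof (digit_le d x (S n) Hx ltac:(lia)). lia.
Qed.

Lemma digit1_bounds (d : nat) (x : R) : 0 <= x <= 1 ->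
  INR (digit d x 1) * q0 d <= x <= (INR (digit d x 1) + 1) * q0 d.
Proof.
  intros Hx. pose proof (q0_mul_succ d) as Hz. pose proof (q0_pos d).
  unfold digit. destruct (Rlt_dec x 1) as [Hl|Hl].
  - replace (Int_part (x * INR (S d) ^ (1 - 1))) with 0%Z.
    2:{ apply Int_part_spec. simpl. lra. }
    rewrite Z.mul_0_r, Z.sub_0_r, pow_1.
    assert (0 <= x * INR (S d)) by (apply Rmult_le_pos; [lra|apply pos_INR]).
    pose proof (base_Int_part (x * INR (S d))).
    assert (Hz' : (0 <= Int_part (x * INR (S d)))%Z)
      by (cut (-1 < Int_part (x * INR (S d)))%Z; [lia|apply lt_IZR; change (IZR (-1)) with (-1); lra]).
    rewrite INR_IZR_INZ, Z2Nat.id by exact Hz'.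
    rewrite S_INR in *. split; nra.
  - assert (x = 1) by lra. subst x. pose proof (pos_INR d). split; nra.
Qed.

(** * Differentiating [F] at [q0] *)

Lemma F_Series (d : nat) (q x : R) : ex_series (Fterm d q x) -> F d q x = Series (Fterm d q x).
Proof.
  intros Hex. unfold F.
  assert (Hs : infinite_sum (Fterm d q x) (Series (Fterm d q x)))
    by (apply is_series_Reals, Series_correct, Hex).
  exact (uniqueness_sum _ _ _ (epsilon_spec (inhabits 0) _ (ex_intro _ _ Hs)) Hs).
Qed.

Definition dFterm (d : nat) (x : R) (n : nat) : R :=
  let w := INR (digit d x (S n)) in
  let s := INR (digsum d x n) in
  let beta := - 2 * INR (S d) / INR d in
  w * (w - 1) / 2 * beta * q0 d ^ S n + w * INR (S n) * q0 d ^ n + w * q0 d ^ S n * s * beta.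

Section FDerivative.

Variables (d : nat) (x : R).
Hypotheses (Hd : (1 <= d)%nat) (Hx : 0 <= x <= 1).

Lemma Fterm_q0 (n : nat) : Fterm d (q0 d) x n = INR (digit d x (S n)) * q0 d ^ S n.
Proof. unfold Fterm. rewrite bq_q0, geom_part_1, pow1 by exact Hd. ring. Qed.

Lemma derivable_pt_lim_Fterm (n : nat) :
  derivable_pt_lim (fun q => Fterm d q x n) (q0 d) (dFterm d x n).
Proof.
  set (w := digit d x (S n)). set (s := digsum d x n).
  set (beta := - 2 * INR (S d) / INR d).
  assert (H1 : derivable_pt_lim (comp (fun b => geom_part b w) (bq d)) (q0 d)
     (INR w * (INR w - 1) / 2 * beta)).
  { apply derivable_pt_lim_comp; [apply derivable_pt_lim_bq, Hd|].
    rewrite bq_q0 by exact Hd. apply derivable_pt_lim_geom_part_1. }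
  assert (H2 : derivable_pt_lim (fun q => q ^ S n) (q0 d) (INR (S n) * q0 d ^ n))
    by apply derivable_pt_lim_pow.
  assert (H3 : derivable_pt_lim (comp (fun y => y ^ s) (bq d)) (q0 d) (INR s * 1 ^ pred s * beta)).
  { apply derivable_pt_lim_comp; [apply derivable_pt_lim_bq, Hd|].
    rewrite bq_q0 by exact Hd. apply derivable_pt_lim_pow. }
  pose proof (derivable_pt_lim_mult _ _ _ _ _ (derivable_pt_lim_mult _ _ _ _ _ H1 H2) H3) as H.
  unfold mult_fct, comp in H. rewrite bq_q0, geom_part_1, !pow1 in H by exact Hd.
  unfold Fterm, dFterm. fold w s beta.
  replace (INR w * (INR w - 1) / 2 * beta * q0 d ^ S n + INR w * INR (S n) * q0 d ^ n
           + INR w * q0 d ^ S n * INR s * beta)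
    with ((INR w * (INR w - 1) / 2 * beta * q0 d ^ S n + INR w * (INR (S n) * q0 d ^ n)) * 1
          + INR w * q0 d ^ S n * (INR s * 1 * beta)) by ring.
  exact H.
Qed.

(* [K] is the Lipschitz constant of [bq d] at [q0 d] (see [bq_lipschitz]); [radius] keeps
   [q <= 5/8] and [bmax ^ d <= 8/7], so that the increments of the terms decay like [(5/7)^n]. *)
Let K : R := 2 / q0 d ^ 2.
Let radius : R := Rmin (q0 d / 2) (/ (8 * (1 + INR d * K))).
Let bmax : R := 1 + K * radius.
Let monomial_lip (n : nat) : R := 8 / 7 * (1 + K) * ((INR n + 1) * (5 / 7) ^ n).
Let lip (n : nat) : R := INR d * monomial_lip n.

Lemma K_ge0 : 0 <= K.
Proof.
  pose proof (q0_pos d). apply Rmult_le_pos; [lra|apply Rlt_le, Rinv_0_lt_compat, pow_lt; lra].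
Qed.

Lemma radius_bounds :
  0 < radius /\ radius <= q0 d / 2 /\ radius <= / 8 /\ INR d * (K * radius) <= / 8.
Proof.
  pose proof (q0_pos d). pose proof K_ge0.
  assert (HdK : 0 <= INR d * K) by (apply Rmult_le_pos; [apply pos_INR|lra]).
  pose proof (Rmin_l (q0 d / 2) (/ (8 * (1 + INR d * K)))) as Hr1.
  pose proof (Rmin_r (q0 d / 2) (/ (8 * (1 + INR d * K)))) as Hr2. fold radius in Hr1, Hr2.
  assert (Hr : 0 < radius) by (apply Rmin_pos; [lra|apply Rinv_0_lt_compat; lra]).
  repeat split; try lra.
  - eapply Rle_trans; [exact Hr2|]. apply Rinv_le_contravar; lra.
  - rewrite <- Rmult_assoc, Rmult_comm.
    apply Rle_trans with (/ (8 * (1 + INR d * K)) * (INR d * K)); [apply Rmult_le_compat_r; lra|].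
    replace (/ (8 * (1 + INR d * K)) * (INR d * K)) with (/ 8 - / (8 * (1 + INR d * K)))
      by (field; lra).
    assert (0 < / (8 * (1 + INR d * K))) by (apply Rinv_0_lt_compat; lra). lra.
Qed.

Lemma bmax_bounds : 1 <= bmax /\ bmax ^ d <= 8 / 7.
Proof.
  pose proof K_ge0. destruct radius_bounds as (Hr & _ & _ & Hy).
  assert (1 <= bmax) by (unfold bmax; nra). split; [assumption|].
  pose proof (pow_1plus_mul_le d (K * radius) ltac:(nra) ltac:(lra)).
  assert (0 <= bmax ^ d) by (apply pow_le; lra). unfold bmax in *. nra.
Qed.

Lemma bq_near_q0 (h : R) : Rabs h < radius ->
  0 < q0 d + h <= 5 / 8 /\ 0 <= bq d (q0 d + h) <= bmax /\
  Rabs (bq d (q0 d + h) - 1) <= K * Rabs h.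
Proof.
  intros Hh. pose proof (q0_le_half d Hd). pose proof K_ge0.
  destruct radius_bounds as (Hr & Hr1 & Hr2 & _).
  destruct (bq_lipschitz d (q0 d + h) Hd) as [Hq Hb].
  { replace (q0 d + h - q0 d) with h by ring. lra. }
  replace (q0 d + h - q0 d) with h in Hb by ring. fold K in Hb.
  pose proof (Rle_abs (bq d (q0 d + h) - 1)).
  assert (K * Rabs h <= K * radius) by (apply Rmult_le_compat_l; lra).
  apply Rabs_def2 in Hh. pose proof (bq_pos d (q0 d + h) Hd Hq).
  unfold bmax. repeat split; lra.
Qed.

Lemma monomial_lipschitz (n m : nat) (h : R) : (m <= d * S n)%nat -> Rabs h < radius ->
  Rabs ((q0 d + h) ^ S n * bq d (q0 d + h) ^ m - q0 d ^ S n) <= Rabs h * monomial_lip n.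
Proof.
  intros Hm Hh. pose proof (q0_pos d). pose proof (q0_le_half d Hd). pose proof K_ge0.
  destruct (bq_near_q0 h Hh) as (Hq & Hb & Hb1). destruct bmax_bounds as [HB1 HBd].
  set (b := bq d (q0 d + h)) in *.
  eapply Rle_trans; [apply (pow_mul_pow_sub_le n m (q0 d + h) (q0 d) b (5 / 8) bmax); lra|].
  replace (q0 d + h - q0 d) with h by ring.
  assert (HBm : bmax ^ m <= (8 / 7) ^ S n).
  { eapply Rle_trans; [apply Rle_pow; [exact HB1|exact Hm]|].
    rewrite pow_mult. apply pow_incr. split; [apply pow_le|]; lra. }
  assert (Hzm : q0 d ^ S n * INR m <= (INR n + 1) * (5 / 8) ^ n).
  { assert (q0 d ^ n <= (5 / 8) ^ n) by (apply pow_incr; lra).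
    assert (INR m <= INR d * (INR n + 1)) by (rewrite <- S_INR, <- mult_INR; apply le_INR, Hm).
    pose proof (q0_mul_succ d). pose proof (pos_INR m). pose proof (pos_INR n).
    assert (0 <= q0 d ^ n) by (apply pow_le; lra).
    assert (q0 d * INR m <= INR n + 1) by nra.
    replace (q0 d ^ S n * INR m) with (q0 d * INR m * q0 d ^ n) by (simpl; ring).
    apply Rmult_le_compat; nra. }
  assert (q0 d ^ S n * INR m * Rabs (b - 1) <= (INR n + 1) * (5 / 8) ^ n * (K * Rabs h))
    by (apply Rmult_le_compat; try lra; try apply Rabs_pos;
        apply Rmult_le_pos; [apply pow_le; lra|apply pos_INR]).
  unfold monomial_lip. replace (8 / 7 * (1 + K) * ((INR n + 1) * (5 / 7) ^ n))
    with ((1 + K) * (INR n + 1) * (5 / 8) ^ n * (8 / 7) ^ S n)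
    by (replace (5 / 7) with (5 / 8 * (8 / 7)) by field; rewrite Rpow_mult_distr; simpl; ring).
  pose proof (Rabs_pos h). pose proof (pos_INR n). pose proof (Rabs_pos (b - 1)).
  assert (0 <= (5 / 8) ^ n) by (apply pow_le; lra).
  apply Rle_trans with ((1 + K) * (INR n + 1) * (5 / 8) ^ n * Rabs h * (8 / 7) ^ S n);
    [|right; ring].
  rewrite S_INR. apply Rmult_le_compat; [|apply pow_le; lra|nra|exact HBm].
  apply Rplus_le_le_0_compat; [repeat apply Rmult_le_pos; lra|].
  apply Rmult_le_pos; [apply Rmult_le_pos; [apply pow_le; lra|apply pos_INR]|lra].
Qed.

Lemma Fterm_lipschitz (n : nat) (h : R) : Rabs h < radius ->
  Rabs (Fterm d (q0 d + h) x n - Fterm d (q0 d) x n) <= Rabs h * lip n.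
Proof.
  intros Hh. rewrite Fterm_q0. unfold Fterm. rewrite Rmult_assoc.
  eapply Rle_trans.
  { apply geom_part_mul_sub_le. intros i Hi.
    rewrite Rmult_assoc, <- pow_add. apply monomial_lipschitz; [|exact Hh].
    pose proof (digsum_le d x n Hx). pose proof (digit_le d x (S n) Hx ltac:(lia)). lia. }
  assert (INR (digit d x (S n)) <= INR d) by (apply le_INR, digit_le; [exact Hx|lia]).
  assert (0 <= Rabs h * monomial_lip n).
  { pose proof (pos_INR n). pose proof (Rabs_pos h). pose proof K_ge0.
    assert (0 <= (5 / 7) ^ n) by (apply pow_le; lra).
    unfold monomial_lip. repeat apply Rmult_le_pos; lra. }
  unfold lip. nra.
Qed.

Lemma ex_series_lip : ex_series lip.
Proof.
  apply (ex_series_scal_l _ monomial_lip), (ex_series_scal_l _ (fun n => (INR n + 1) * (5 / 7) ^ n)),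
    ex_series_succ_mul_pow. lra.
Qed.

Lemma ex_series_Fterm_q0 : ex_series (Fterm d (q0 d) x).
Proof.
  pose proof (q0_pos d). pose proof (q0_le_half d Hd).
  apply (ex_series_le (V := R_CompleteNormedModule) _ (fun n => INR d * (/ 2) ^ n)).
  - intros n. change (Rabs (Fterm d (q0 d) x n) <= INR d * (/ 2) ^ n).
    rewrite Fterm_q0, Rabs_right by (apply Rle_ge, Rmult_le_pos; [apply pos_INR|apply pow_le; lra]).
    apply Rmult_le_compat; [apply pos_INR|apply pow_le; lra|apply le_INR, digit_le; [exact Hx|lia]|].
    apply Rle_trans with (q0 d ^ n); [simpl; pose proof (pow_le (q0 d) n); nra|].
    apply pow_incr; lra.
  - apply (ex_series_scal_l _ (fun n => (/ 2) ^ n)), ex_series_geom.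
    rewrite Rabs_right; lra.
Qed.

Lemma derivable_pt_lim_F : derivable_pt_lim (fun q => F d q x) (q0 d) (Series (dFterm d x)).
Proof.
  destruct radius_bounds as [Hr _].
  apply (derivable_pt_lim_locally_ext (fun q => Series (Fterm d q x)) _ _
           (q0 d - radius) (q0 d + radius)); [lra| |].
  - intros q Hq. symmetry. apply F_Series.
    replace q with (q0 d + (q - q0 d)) by ring.
    apply (ex_series_shift (fun n q => Fterm d q x n) lip (q0 d) (q - q0 d) (Rabs (q - q0 d))).
    + intros n. apply Fterm_lipschitz. apply Rabs_def1; lra.
    + exact ex_series_lip.
    + exact ex_series_Fterm_q0.
  - apply (derivable_pt_lim_Series (fun n q => Fterm d q x n) _ lip (q0 d) radius); try assumption.
    + exact derivable_pt_lim_Fterm.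
    + intros n h Hh. apply Fterm_lipschitz, Hh.
    + exact ex_series_lip.
    + exact ex_series_Fterm_q0.
Qed.

End FDerivative.

Section Estimate.

Variables (d : nat) (x : R).
Hypotheses (Hd : (1 <= d)%nat) (Hx : 0 <= x <= 1).

Lemma INR_d_ge1 : 1 <= INR d.
Proof. apply (le_INR 1), Hd. Qed.

(* [q0 * beta = -2/d] *)
Lemma dFterm_eq (n : nat) :
  dFterm d x n = q0 d ^ n * (INR (digit d x (S n))
    * (INR (S n) - (INR (digit d x (S n)) - 1 + 2 * INR (digsum d x n)) / INR d)).
Proof.
  pose proof INR_d_ge1. pose proof (q0_mul_succ d).
  unfold dFterm. rewrite !S_INR. simpl pow.
  replace (q0 d) with (/ (INR d + 1)) by (field_simplify_eq; lra). field. lra.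
Qed.

Lemma dFterm_abs_le (n : nat) : Rabs (dFterm d x n) <= 3 * INR d * ((INR n + 1) * q0 d ^ n).
Proof.
  pose proof INR_d_ge1. pose proof (q0_pos d).
  assert (Hw : INR (digit d x (S n)) <= INR d) by (apply le_INR, digit_le; [exact Hx|lia]).
  assert (Hs : INR (digsum d x n) <= INR d * INR n)
    by (rewrite <- mult_INR; apply le_INR, digsum_le, Hx).
  rewrite dFterm_eq, Rabs_mult, Rabs_right by (apply Rle_ge, pow_le; lra).
  set (w := INR (digit d x (S n))) in *. set (s := INR (digsum d x n)) in *.
  assert (Hw0 : 0 <= w) by apply pos_INR. assert (0 <= s) by apply pos_INR.
  assert (Hww : 0 <= w * (w - 1)).
  { unfold w. destruct (digit d x (S n)) as [|k]; [simpl; lra|].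
    rewrite S_INR. pose proof (pos_INR k). nra. }
  assert (Hin : Rabs (w * (INR (S n) - (w - 1 + 2 * s) / INR d)) <= 3 * INR d * (INR n + 1)).
  { rewrite S_INR. apply Rabs_le.
    replace (w * (INR n + 1 - (w - 1 + 2 * s) / INR d))
      with (w * (INR n + 1) - (w * (w - 1) + 2 * w * s) / INR d) by (field; lra).
    assert (w * (w - 1) <= INR d * INR d) by nra.
    assert (w * s <= INR d * (INR d * INR n)) by nra.
    assert (0 <= (w * (w - 1) + 2 * w * s) / INR d <= INR d + 2 * INR d * INR n).
    { split; [apply Rdiv_le_0_compat; nra|].
      apply (Rmult_le_reg_r (INR d)); [lra|]. field_simplify; nra. }
    pose proof (pos_INR n). nra. }
  rewrite Rmult_comm, <- Rmult_assoc. apply Rmult_le_compat_r; [apply pow_le; lra|exact Hin].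
Qed.

Lemma q0_mul_dFterm0_close : Rabs (q0 d * dFterm d x 0 - x * (1 - x)) <= 2 / INR d.
Proof.
  pose proof INR_d_ge1. pose proof (q0_mul_succ d) as Hz. pose proof (q0_pos d).
  pose proof (digit1_bounds d x Hx) as [Hy1 Hy2].
  set (y := INR (digit d x 1) * q0 d) in *.
  assert (Hyz : x <= y + q0 d) by (unfold y; lra).
  assert (Hy0 : 0 <= y) by (unfold y; apply Rmult_le_pos; [apply pos_INR|lra]).
  (* with [y = omega_1 q0], the leading term is [y (1 - y) (1 + 1/d)] *)
  replace (q0 d * dFterm d x 0) with (y * (1 - y) + y * (1 - y) / INR d).
  2:{ rewrite dFterm_eq. unfold y. simpl digsum. rewrite !S_INR.
      replace (q0 d) with (/ (INR d + 1)) by (field_simplify_eq; lra). simpl. field. lra. }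
  pose proof (q0_le_inv d Hd) as Hzd.
  assert (Hxy : Rabs (y * (1 - y) - x * (1 - x)) <= / INR d).
  { replace (y * (1 - y) - x * (1 - x)) with ((x - y) * (x + y - 1)) by ring.
    rewrite Rabs_mult. apply Rle_trans with (q0 d * 1); [|lra].
    apply Rmult_le_compat; try apply Rabs_pos; apply Rabs_le; lra. }
  assert (0 <= y * (1 - y) / INR d <= / INR d).
  { unfold Rdiv. split; [apply Rmult_le_pos; [nra|apply Rlt_le, Rinv_0_lt_compat; lra]|].
    rewrite <- (Rmult_1_l (/ INR d)) at 2. apply Rmult_le_compat_r; [apply Rlt_le, Rinv_0_lt_compat|]; nra. }
  replace (y * (1 - y) + y * (1 - y) / INR d - x * (1 - x))
    with ((y * (1 - y) - x * (1 - x)) + y * (1 - y) / INR d) by ring.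
  eapply Rle_trans; [apply Rabs_triang|]. rewrite (Rabs_right (y * (1 - y) / INR d)) by lra.
  replace (2 / INR d) with (/ INR d + / INR d) by (field; lra). lra.
Qed.

Lemma q0_mul_Series_dFterm_close : Rabs (q0 d * Series (dFterm d x) - x * (1 - x)) <= 74 / INR d.
Proof.
  pose proof INR_d_ge1. pose proof (q0_mul_succ d) as Hz. pose proof (q0_pos d).
  pose proof (q0_le_half d Hd).
  pose proof (q0_le_inv d Hd) as Hzd.
  assert (Hex : ex_series (dFterm d x)).
  { apply (ex_series_le (V := R_CompleteNormedModule) _ _ dFterm_abs_le).
    apply (ex_series_scal_l _ (fun n => (INR n + 1) * q0 d ^ n)), ex_series_succ_mul_pow. lra. }
  rewrite Series_incr_1, Rmult_plus_distr_l by exact Hex.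
  (* the terms [n >= 1] carry an extra factor [q0 <= 1/d] *)
  assert (Htail : Rabs (Series (fun k => q0 d * dFterm d x (S k))) <= 12 * (6 * q0 d)).
  { apply Series_abs_le_succ_mul_pow with (r := q0 d); [lra|]. intros k.
    rewrite Rabs_mult, Rabs_right by lra.
    eapply Rle_trans; [apply Rmult_le_compat_l; [lra|apply dFterm_abs_le]|].
    rewrite S_INR. simpl pow. pose proof (pos_INR k).
    assert (0 <= q0 d ^ k) by (apply pow_le; lra).
    assert (q0 d * INR d <= 1) by nra.
    assert (0 <= (INR k + 1) * q0 d ^ k) by nra.
    assert (0 <= q0 d * q0 d ^ k) by nra.
    replace (q0 d * (3 * INR d * ((INR k + 1 + 1) * (q0 d * q0 d ^ k))))
      with (q0 d * INR d * (3 * (INR k + 1 + 1) * (q0 d * q0 d ^ k))) by ring.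
    apply Rle_trans with (1 * (3 * (INR k + 1 + 1) * (q0 d * q0 d ^ k))).
    - apply Rmult_le_compat_r; [apply Rmult_le_pos|]; lra.
    - nra. }
  rewrite Series_scal_l in Htail.
  replace (q0 d * dFterm d x 0 + q0 d * Series (fun k => dFterm d x (S k)) - x * (1 - x))
    with ((q0 d * dFterm d x 0 - x * (1 - x)) + q0 d * Series (fun k => dFterm d x (S k))) by ring.
  eapply Rle_trans; [apply Rabs_triang|].
  pose proof q0_mul_dFterm0_close.
  replace (74 / INR d) with (2 / INR d + 72 * / INR d) by (field; lra). lra.
Qed.

End Estimate.

Theorem mainTheorem10 :
  exists D : nat -> R -> R,
    (forall (d : nat) (x : R), (1 <= d)%nat -> 0 <= x <= 1 ->
       derivable_pt_lim (fun q => F d q x) (/ INR (S d)) (D d x)) /\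
    (forall eps : R, eps > 0 ->
       exists N : nat, forall (d : nat), (1 <= d)%nat -> (N <= d)%nat ->
         forall x : R, 0 <= x <= 1 ->
           Rabs (/ INR (S d) * D d x - x * (1 - x)) <= eps).
Proof.
  exists (fun d x => Series (dFterm d x)). split.
  - exact derivable_pt_lim_F.
  - intros eps Heps. destruct (INR_archimed eps 74 Heps) as [N HN].
    exists N. intros d Hd HNd x Hx.
    eapply Rle_trans; [exact (q0_mul_Series_dFterm_close d x Hd Hx)|].
    assert (INR N <= INR d) by (apply le_INR, HNd).
    pose proof (INR_d_ge1 d Hd).
    apply (Rmult_le_reg_r (INR d)); [lra|].
    unfold Rdiv. rewrite Rmult_assoc, Rinv_l by lra. nra.
Qed.
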